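(* Let $G$ be a periodic group such that the set of primes dividing the orders of elements of $G$ is exactly $\{2,3\}$, for any two elements $g,h\in G$ of orders at most $4$ the order of $gh$ is at most $9$, and the centralizer of every involution of $G$ is a locally cyclic $2$-group. Let $x\in G$ have order $3$ and $a\in G$ have order $2$ with $a^{-1}xa=x^{-1}$. Then $C_G(x)$ is an abelian $3$-group of exponent at most $9$, and $a$ acts on $C_G(x)$ by inversion (i.e. $a^{-1}ca=c^{-1}$ for all $c\in C_G(x)$). *)

From HB Require Import structures.
From mathcomp Require Import all_boot monoid.
Set Implicit Arguments. Unset Strict Implicit. Unset Printing Implicit Defensive.
Local Open Scope group_scope.

Section Defs.
Variable G : groupType.

Definition order_is (x : G) (n : nat) : Prop :=
  (0 < n)%N /\ x ^+ n = 1 /\ forall m, (0 < m)%N -> x ^+ m = 1 -> (n <= m)%N.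

Definition periodic : Prop := forall x : G, exists n, order_is x n.

Definition centralizer (x : G) : G -> Prop := fun c => c * x = x * c.

Definition p_elt (p : nat) (x : G) : Prop := exists k, x ^+ (p ^ k) = 1.

Inductive gen (s : seq G) : G -> Prop :=
| gen_mem x : x \in s -> gen s x
| gen_one : gen s 1
| gen_mul x y : gen s x -> gen s y -> gen s (x * y)
| gen_inv x : gen s x -> gen s (x ^-1).

Definition locally_cyclic (H : G -> Prop) : Prop :=
  forall s : seq G, (forall y, y \in s -> H y) ->
  exists z, gen s z /\ forall y, gen s y -> exists k, y = z ^+ k \/ y = (z ^+ k)^-1.

End Defs.

From HB Require Import structures.
From mathcomp Require Import all_boot monoid.
Local Open Scope group_scope.

(* An involution commuting with a nontrivial 3-element would make it a
   2-element too, so C_G(x) has no involutions and, as only 2 and 3 divide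
   element orders, it is a 3-group.  For c in C_G(x), g = c a inverts x, so
   g^2 centralizes x and is a 3-element.  If g had odd order it would be a
   power of g^2 and commute with x, which is impossible; so some power of g
   is an involution centralizing the 3-element g^2, forcing g^2 = 1.  Thus a
   inverts C_G(x), which is therefore abelian, and c = (c a) a is a product
   of two elements of order at most 2, so its order is a power of 3 that is
   at most 9. *)

Section GroupFacts.
Context {G : groupType}.
Implicit Types y z : G.

Lemma order_is_dvd y n m : order_is y n -> y ^+ m = 1 -> (n %| m)%N.
Proof.
move=> [n_gt0 [yn ymin]] ym.
have ymod : y ^+ (m %% n) = 1.
  by move: ym; rewrite {1}(divn_eq m n) expgnDr mulnC expgnA yn expg1n mul1g.
have [/eqP //|mod_gt0] := posnP (m %% n).
by have := ymin _ mod_gt0 ymod; rewrite leqNgt ltn_mod n_gt0.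
Qed.

Lemma order_is_expg_dvd y n m : order_is y n -> (n %| m)%N -> y ^+ m = 1.
Proof. by move=> [_ [yn _]] /dvdnP[q ->]; rewrite mulnC expgnA yn expg1n. Qed.

Lemma order_is_expg_neq1 y n m : order_is y n -> (0 < m < n)%N -> y ^+ m <> 1.
Proof.
move=> [_ [_ ymin]] /andP[m_gt0 lt_mn] ym.
by have := ymin _ m_gt0 ym; rewrite leqNgt lt_mn.
Qed.

Lemma order_is_neq1 y n : order_is y n -> (1 < n)%N -> y <> 1.
Proof. by move=> yn n_gt1; apply: (order_is_expg_neq1 _ _ 1 yn). Qed.

Lemma order_is2 y : y ^+ 2 = 1 -> y <> 1 -> order_is y 2.
Proof.
by move=> y2 y_neq1; do 2!split=> //; case=> [|[|m]] // _; rewrite expg1.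
Qed.

Lemma order_is2_invg y : order_is y 2 -> y^-1 = y.
Proof. by move=> [_ [y2 _]]; apply: mulg1_eq. Qed.

Lemma order_is_half y n :
  order_is y n -> (2 %| n)%N -> order_is (y ^+ (n %/ 2)) 2.
Proof.
move=> yn n_even; have [n_gt0 [y_n _]] := yn.
apply: order_is2; first by rewrite -expgnA divnK.
apply: (order_is_expg_neq1 _ _ _ yn); move/dvdnP: n_even => [k def_n].
have k_gt0 : (0 < k)%N by move: n_gt0; rewrite def_n muln_gt0 => /andP[].
by rewrite def_n mulnK // k_gt0 -{1}[k]muln1 ltn_pmul2l.
Qed.

Lemma expg_coprime_eq1 y m n : coprime m n -> y ^+ m = 1 -> y ^+ n = 1 -> y = 1.
Proof.
move=> co_mn ym yn; have [m0|m_gt0] := posnP m.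
  by move: co_mn; rewrite m0 /coprime gcd0n => /eqP n1; rewrite -yn n1.
have [u _ /dvdnP[q bezout]] := Bezoutl n m_gt0.
rewrite (eqP co_mn) in bezout.
have -> : y = y ^+ (1 + u * n) by rewrite expgnDr mulnC expgnA yn expg1n mulg1.
by rewrite bezout mulnC expgnA ym expg1n.
Qed.

Lemma p_elt2_p_elt3_eq1 y : p_elt 2 y -> p_elt 3 y -> y = 1.
Proof.
move=> [i y2] [j y3]; apply: (expg_coprime_eq1 _ _ _ _ y2 y3).
by rewrite coprimeXl // coprimeXr.
Qed.

Lemma commute_sqr_odd y z n :
  odd n -> y ^+ n = 1 -> commute z (y ^+ 2) -> commute z y.
Proof.
move=> n_odd yn /(commuteX (uphalf n)); congr commute.
have even_Sn : (uphalf n).*2 = n.+1 by rewrite -[RHS]odd_double_half /= n_odd.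
by rewrite -expgnA mul2n even_Sn expgSr yn mul1g.
Qed.

Lemma centralizer_mul (x c d : G) :
  centralizer x c -> centralizer x d -> centralizer x (c * d).
Proof. by move=> cx dx; apply/commute_sym/commuteM; apply/commute_sym. Qed.

Lemma conj_inv_abelian (H : G -> Prop) a :
    (forall c d, H c -> H d -> H (c * d)) ->
    (forall c, H c -> a^-1 * c * a = c^-1) ->
  forall c d, H c -> H d -> c * d = d * c.
Proof.
move=> H_mul a_inv c d Hc Hd.
have conjM : a^-1 * (c * d) * a = (a^-1 * c * a) * (a^-1 * d * a).
  by rewrite !mulgA mulgK.
move: (a_inv _ (H_mul _ _ Hc Hd)); rewrite conjM !a_inv //.
move=> /(congr1 (@inv _)).
by rewrite !invgM !invgK.
Qed.

End GroupFacts.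

Section CentralizerOfOrder3.
Context {G : groupType}.
Hypothesis G_periodic : periodic G.
Hypothesis primes23 : forall (p : nat) (g : G) n,
  prime p -> order_is g n -> (p %| n)%N -> p = 2 \/ p = 3.
Hypothesis centralizer_involution_p_elt2 : forall i c : G,
  order_is i 2 -> centralizer i c -> p_elt 2 c.
Context {x : G}.
Hypothesis x_order3 : order_is x 3.

Lemma odd_order_p_elt3 (c : G) n : order_is c n -> odd n -> p_elt 3 c.
Proof.
move=> cn n_odd; have n_gt0 := cn.1.
have : 3.-nat n.
  apply/pnatP => // p p_pr p_dvd.
  have [p2|-> //] := primes23 _ _ _ p_pr cn p_dvd.
  by move: p_dvd; rewrite p2 dvdn2 n_odd.
by move=> /p_natP[k def_n]; exists k; rewrite -def_n; case: cn => _ [].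
Qed.

Lemma p_elt3_centralizer_involution_eq1 (i y : G) :
  order_is i 2 -> centralizer i y -> p_elt 3 y -> y = 1.
Proof.
move=> i2 iy; apply: p_elt2_p_elt3_eq1.
exact: (centralizer_involution_p_elt2 _ _ i2 iy).
Qed.

Lemma centralizer_p_elt3 (c : G) : centralizer x c -> p_elt 3 c.
Proof.
move=> cx; have [n cn] := G_periodic c; apply: (odd_order_p_elt3 _ _ cn).
have [n_even|] := boolP (2 %| n)%N; last by rewrite dvdn2 negbK.
case: (order_is_neq1 _ _ x_order3 isT).
apply: (p_elt3_centralizer_involution_eq1 _ _ (order_is_half _ _ cn n_even)).
  exact/commuteX/esym.
by exists 1%N; case: x_order3 => _ [].
Qed.

Lemma inverter_sqr_eq1 (g : G) : g * x = x^-1 * g -> g ^+ 2 = 1.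
Proof.
move=> g_inv.
have gxV : g * x^-1 = x * g.
  by apply: (mulIg x); rewrite mulgVK -mulgA g_inv mulgA mulgV mul1g.
have g2x : centralizer x (g ^+ 2).
  by rewrite /centralizer expg2 -mulgA g_inv mulgA gxV -mulgA.
have g2_p_elt3 := centralizer_p_elt3 _ g2x; have [j g2j] := g2_p_elt3.
have [g_odd|u_neq1] := eqVneq (g ^+ (3 ^ j)) 1.
  have xg : commute x g.
    apply: (commute_sqr_odd _ _ (3 ^ j) _ g_odd); last exact/esym.
    by rewrite oddX orbT.
  have xV : x^-1 = x by apply: (mulIg g); rewrite -g_inv -xg.
  case: (order_is_expg_neq1 _ _ 2 x_order3 isT).
  by rewrite expg2 -{1}xV mulVg.
apply: (p_elt3_centralizer_involution_eq1 (g ^+ (3 ^ j)) _ _ _ g2_p_elt3).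
  by apply: order_is2 => //; [rewrite expgnAC | apply/eqP].
exact: commuteX2.
Qed.

Context {a : G}.
Hypothesis a_order2 : order_is a 2.
Hypothesis a_inverts_x : a^-1 * x * a = x^-1.

Lemma centralizer_mul_sqr_eq1 (c : G) : centralizer x c -> (c * a) ^+ 2 = 1.
Proof.
move=> cx; have [_ [a2 _]] := a_order2.
have ax : a * x = x^-1 * a.
  by rewrite -a_inverts_x -mulgA -expg2 a2 mulg1 order_is2_invg.
by apply: inverter_sqr_eq1; rewrite -mulgA ax mulgA (commuteV cx) -mulgA.
Qed.

Lemma centralizer_conj_inv (c : G) : centralizer x c -> a^-1 * c * a = c^-1.
Proof.
move=> /centralizer_mul_sqr_eq1 ca2; rewrite order_is2_invg //.
by apply/esym/mulg1_eq; rewrite !mulgA -(mulgA (c * a)).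
Qed.

Hypothesis product_order_le9 : forall (g h : G) m n,
  order_is g m -> order_is h n -> (m <= 4)%N -> (n <= 4)%N ->
  exists k, order_is (g * h) k /\ (k <= 9)%N.

Lemma centralizer_expg9 (c : G) : centralizer x c -> c ^+ 9 = 1.
Proof.
move=> cx; have [n ca_n] := G_periodic (c * a).
have n_dvd2 := order_is_dvd _ _ _ ca_n (centralizer_mul_sqr_eq1 _ cx).
have n_le4 : (n <= 4)%N by rewrite (leq_trans (dvdn_leq _ n_dvd2)).
have [k [ck k_le9]] := product_order_le9 _ _ _ _ ca_n a_order2 n_le4 isT.
rewrite -mulgA -expg2 a_order2.2.1 mulg1 in ck.
have [j cj] := centralizer_p_elt3 _ cx.
have /dvdn_pfactor[//|i i_le_j def_k] := order_is_dvd _ _ _ ck cj.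
apply: (order_is_expg_dvd _ _ _ ck).
rewrite def_k (dvdn_exp2l 3 (_ : i <= 2)%N) //.
by rewrite -(leq_exp2l _ _ (isT : (1 < 3)%N)) -def_k.
Qed.

End CentralizerOfOrder3.

Theorem lemma3 (G : groupType)
  (Hper : periodic G)
  (Hspec : forall p : nat, prime p ->
     ((exists (g : G) n, order_is g n /\ (p %| n)%N) <-> (p = 2 \/ p = 3)))
  (Hprod : forall (g h : G) (m n : nat), order_is g m -> order_is h n ->
     (m <= 4)%N -> (n <= 4)%N -> exists k, order_is (g * h) k /\ (k <= 9)%N)
  (Hinv : forall i : G, order_is i 2 ->
     (forall c, centralizer i c -> p_elt 2 c) /\ locally_cyclic (centralizer i))
  (x a : G) (Hx : order_is x 3) (Ha : order_is a 2) (Hax : a^-1 * x * a = x^-1) :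
  (forall c d, centralizer x c -> centralizer x d -> c * d = d * c) /\
  (forall c, centralizer x c -> p_elt 3 c) /\
  (exists e, (0 < e <= 9)%N /\ forall c, centralizer x c -> c ^+ e = 1) /\
  (forall c, centralizer x c -> a^-1 * c * a = c^-1).
Proof.
have primes23 p (g : G) n :
    prime p -> order_is g n -> (p %| n)%N -> p = 2 \/ p = 3.
  by move=> p_pr gn p_dvd; apply: (Hspec p p_pr).1; exists g, n.
have inv_p_elt2 (i c : G) : order_is i 2 -> centralizer i c -> p_elt 2 c.
  by move=> i2; apply: (Hinv i i2).1.
have conj_inv := centralizer_conj_inv Hper primes23 inv_p_elt2 Hx Ha Hax.
split; first exact: (conj_inv_abelian _ _ (centralizer_mul x) conj_inv).
split; first exact: (centralizer_p_elt3 Hper primes23 inv_p_elt2 Hx).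
split; last exact: conj_inv.
exists 9; split=> //.
exact: (centralizer_expg9 Hper primes23 inv_p_elt2 Hx Ha Hax Hprod).
Qed.
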